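(* Let $\theta^0$ be a parameter vector at which Assumption 4 (GMFCQ, stated in the context) holds. If the first-order optimality condition (stated in the context) fails at $\theta^0$, then there exist a direction $D_\theta$ and positive constants $\epsilon_8,\epsilon_9$ such that $$\langle D_\theta,\nabla_\theta\mathcal{O}(\theta^0)\rangle<-\epsilon_8,\qquad \langle D_\theta,\nabla_\theta\text{dist}(b_{ij}(t,\theta^0),o_k)\rangle>\epsilon_9$$ for all $(i,j,k,t)$ with $\text{dist}(b_{ij}(t,\theta^0),o_k)=d_0$.
   Context: For a finite-dimensional parameter vector $\theta$ and $t\in[0,T]$, robot pieces $b_{ij}(t,\theta)\subset\mathbb{R}^3$ and obstacle pieces $o_k\subset\mathbb{R}^3$ are given (finitely many triples $(i,j,k)$) such that each $(t,\theta)\mapsto\text{dist}(b_{ij}(t,\theta),o_k)$ (shortest Euclidean distance) is differentiable; $d_0\ge0$ is a safe distance; $\mathcal{O}(\theta)$ is a differentiable cost. First-order optimality at $\theta^0$: for every direction $D_\theta$ with $\langle D_\theta,\nabla_\theta\text{dist}(b_{ij}(t,\theta^0),o_k)\rangle\ge0$ for all $(i,j,k,t)$ with $\text{dist}(b_{ij}(t,\theta^0),o_k)=d_0$, one has $\langle D_\theta,\nabla_\theta\mathcal{O}(\theta^0)\rangle\ge0$. Assumption 4 (GMFCQ at $\theta^0$): there exist a direction $D_\theta$ and $\epsilon_7>0$ with $\langle D_\theta,\nabla_\theta\text{dist}(b_{ij}(t,\theta^0),o_k)\rangle\ge\epsilon_7$ for all $(i,j,k,t)$ with $\text{dist}(b_{ij}(t,\theta^0),o_k)=d_0$.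 *)

From HB Require Import structures.
From mathcomp Require Import all_boot all_order all_algebra.
From mathcomp Require Import all_classical all_reals all_analysis.
Set Implicit Arguments. Unset Strict Implicit. Unset Printing Implicit Defensive.
Import Order.TTheory GRing.Theory Num.Theory.
Import numFieldNormedType.Exports.
Local Open Scope classical_set_scope.
Local Open Scope ring_scope.

Definition eucl_norm (R : realType) (x : 'rV[R]_3) : R :=
  Num.sqrt (\sum_(i < 3) x ord0 i ^+ 2).

Definition setdist (R : realType) (A B : set 'rV[R]_3) : R :=
  inf [set eucl_norm (x - y) | x in A & y in B].

Definition grad (R : realType) (n : nat) (f : 'rV[R]_n -> R) (th : 'rV[R]_n)
  : 'rV[R]_n := \row_(i < n) ('D_(delta_mx ord0 i) f th).

Definition dotp (R : realType) (n : nat) (u v : 'rV[R]_n) : R :=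
  \sum_(i < n) u ord0 i * v ord0 i.

From HB Require Import structures.
From mathcomp Require Import all_boot all_order all_algebra.
From mathcomp Require Import all_classical all_reals all_analysis.
From mathcomp Require Import ring lra.
Set Implicit Arguments. Unset Strict Implicit. Unset Printing Implicit Defensive.
Import Order.TTheory GRing.Theory Num.Theory.
Import numFieldNormedType.Exports.
Local Open Scope classical_set_scope.
Local Open Scope ring_scope.

(* If optimality fails, some direction D1 decreases the cost while keeping
   every active constraint gradient nonnegative; adding a small positive
   multiple s of the GMFCQ direction D2 makes all active inner products at
   least s * eps7 while keeping the cost decrease, provided s |<D2, grad cost>|
   is at most half the decrease of D1. *)

Lemma dotpDl (R : realType) (n : nat) (u v w : 'rV[R]_n) :
  dotp (u + v) w = dotp u w + dotp v w.
Proof. by rewrite /dotp -big_split; apply: eq_bigr => i _; rewrite mxE mulrDl. Qed.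

Lemma dotpZl (R : realType) (n : nat) (s : R) (v w : 'rV[R]_n) :
  dotp (s *: v) w = s * dotp v w.
Proof. by rewrite /dotp mulr_sumr; apply: eq_bigr => i _; rewrite mxE mulrA. Qed.

Lemma small_step_keeps_half_descent (R : realFieldType) (a c : R) :
  a < 0 -> exists2 s : R, 0 < s & a + s * c < a / 2.
Proof.
move=> a_lt0; have cN1_gt0 : 0 < `|c| + 1 by rewrite ltr_wpDl.
set s := - a / (2 * (`|c| + 1)).
have s_gt0 : 0 < s by rewrite divr_gt0 ?mulr_gt0 ?oppr_gt0.
exists s => //.
have halve : s * (`|c| + 1) = - a / 2 by rewrite /s; field; rewrite gt_eqF.
have : s * c <= s * `|c| by rewrite ler_pM2l // real_ler_norm ?num_real.
have : s * `|c| < - a / 2 by rewrite -halve ltr_pM2l // ltrDl.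
lra.
Qed.

Lemma descent_and_strictly_feasible_direction (R : realType) (n : nat)
    (active : set 'rV[R]_n) (g0 D1 D2 : 'rV[R]_n) (eps7 : R) :
  dotp D1 g0 < 0 -> (forall g, active g -> 0 <= dotp D1 g) ->
  0 < eps7 -> (forall g, active g -> eps7 <= dotp D2 g) ->
  exists (D : 'rV[R]_n) (eps8 eps9 : R), 0 < eps8 /\ 0 < eps9 /\
    dotp D g0 < - eps8 /\ forall g, active g -> eps9 < dotp D g.
Proof.
move=> D1g0_lt0 D1_ge0 eps7_gt0 D2_ge.
have [s s_gt0 descent] :
    exists2 s : R, 0 < s & dotp D1 g0 + s * dotp D2 g0 < dotp D1 g0 / 2.
  exact: small_step_keeps_half_descent.
exists (D1 + s *: D2), (- dotp D1 g0 / 2), (s * eps7 / 2).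
split; first by rewrite divr_gt0 ?oppr_gt0.
split; first by rewrite divr_gt0 ?mulr_gt0.
split; first by rewrite dotpDl dotpZl mulNr opprK.
move=> g /[dup] /D1_ge0 D1g_ge0 /D2_ge /(ler_wpM2l (ltW s_gt0)).
have : 0 < s * eps7 by rewrite mulr_gt0.
rewrite dotpDl dotpZl; lra.
Qed.

Theorem lemma8 (R : realType) (n : nat) (I J K : finType) (T d0 : R)
  (b : I -> J -> R -> 'rV[R]_n -> set 'rV[R]_3) (o : K -> set 'rV[R]_3)
  (cost : 'rV[R]_n -> R) (theta0 : 'rV[R]_n)
  (hd0 : 0 <= d0)
  (hdist : forall i j k (z : R * 'rV[R]_n), 0 <= z.1 <= T ->
      differentiable (fun w : R * 'rV[R]_n => setdist (b i j w.1 w.2) (o k)) z)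
  (hcost : forall th, differentiable cost th)
  (GMFCQ : exists (D : 'rV[R]_n) (eps7 : R), 0 < eps7 /\
      forall i j k t, 0 <= t <= T -> setdist (b i j t theta0) (o k) = d0 ->
        eps7 <= dotp D (grad (fun th => setdist (b i j t th) (o k)) theta0))
  (not_first_order_optimal : ~ (forall D : 'rV[R]_n,
      (forall i j k t, 0 <= t <= T -> setdist (b i j t theta0) (o k) = d0 ->
        0 <= dotp D (grad (fun th => setdist (b i j t th) (o k)) theta0)) ->
      0 <= dotp D (grad cost theta0))) :
  exists (D : 'rV[R]_n) (eps8 eps9 : R), 0 < eps8 /\ 0 < eps9 /\
    dotp D (grad cost theta0) < - eps8 /\
    (forall i j k t, 0 <= t <= T -> setdist (b i j t theta0) (o k) = d0 ->
       eps9 < dotp D (grad (fun th => setdist (b i j t th) (o k)) theta0)).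
Proof.
(* The argument only uses the gradients at theta0. *)
pose active := [set g | exists i j k t, 0 <= t <= T /\
  setdist (b i j t theta0) (o k) = d0 /\
  g = grad (fun th => setdist (b i j t th) (o k)) theta0].
have [D2 [eps7 [eps7_gt0 D2_ge]]] := GMFCQ.
have [D1 [D1_descent D1_ge0]] : exists D1 : 'rV[R]_n,
    dotp D1 (grad cost theta0) < 0 /\ forall g, active g -> 0 <= dotp D1 g.
  apply: contrapT => no_D1; apply: not_first_order_optimal => D D_ge0.
  rewrite leNgt; apply/negP => D_descent; apply: no_D1; exists D.
  by split=> // g [i [j [k [t [t_in [act ->]]]]]]; exact: D_ge0.
have D2_ge_active : forall g, active g -> eps7 <= dotp D2 g.
  by move=> g [i [j [k [t [t_in [act ->]]]]]]; exact: D2_ge.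
have [D [eps8 [eps9 [eps8_gt0 [eps9_gt0 [D_descent D_gt]]]]]] :=
  descent_and_strictly_feasible_direction D1_descent D1_ge0 eps7_gt0 D2_ge_active.
exists D, eps8, eps9; do 3![split=> //].
by move=> i j k t t_in act; apply: D_gt; exists i, j, k, t.
Qed.
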